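(* With $T_{2,n,q}$ as defined below, as $n\to\infty$, $$|T_{2,n,q}|=\begin{cases}O(n^{-1}) & q\in[-1,0),\\ O(n^{-1}\log n) & q=0,\\ O(n^{q-1}) & q\in(0,1).\end{cases}$$
   Context: For $q\in[-1,1)$ and $k\ge1$: $H(k,q):=\frac{k}{2q-1}\Big(\frac{\Gamma(k+2q)}{\Gamma(k+1)\Gamma(2q)}-1\Big)$ if $q\ne\frac12$ (where $\frac{\Gamma(k+2q)}{\Gamma(2q)}$ means the Pochhammer product $2q(2q+1)\cdots(2q+k-1)$), and $H(k,\tfrac12):=k\sum_{j=1}^k\frac1j$. Also $I(k,q):=\frac{\Gamma(k+1)}{\Gamma(k+q)\Gamma(1-q)}$, with the convention $1/\Gamma(0)=0$. Define $$T_{2,n,q}:=\int_0^1\frac{u^{n+q}(1-u)^{-q}}{1+u}\,du\ \sum_{k=1}^n(-1)^{n-k}\frac{H(k,q)I(k,q)}{k^2}.$$ *)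

From Stdlib Require Import Reals.
From Coquelicot Require Import Coquelicot.
Open Scope R_scope.

Definition Gamma (x : R) : R :=
  RInt_gen (fun t => Rpower t (x - 1) * exp (- t)) (at_right 0) (Rbar_locally p_infty).

(* 1/Gamma on [0, +oo), with the convention 1/Gamma(0) = 0.
   (Only used at arguments >= 0.) *)
Definition rGamma (x : R) : R := if Rlt_dec 0 x then / Gamma x else 0.

(* Pochhammer product a (a+1) ... (a+k-1) = Gamma(a+k)/Gamma(a). *)
Fixpoint poch (a : R) (k : nat) : R :=
  match k with
  | O => 1
  | S k' => poch a k' * (a + INR k')
  end.

Definition Hfun (k : nat) (q : R) : R :=
  if Req_EM_T q (1/2) then INR k * sum_n_m (fun j => / INR j) 1 k
  else INR k / (2 * q - 1) * (poch (2 * q) k / INR (Factorial.fact k) - 1).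

Definition Ifun (k : nat) (q : R) : R :=
  INR (Factorial.fact k) * rGamma (INR k + q) * rGamma (1 - q).

Definition T2 (n : nat) (q : R) : R :=
  RInt_gen (fun u => Rpower u (INR n + q) * Rpower (1 - u) (- q) / (1 + u))
           (at_right 0) (at_left 1)
  * sum_n_m (fun k => (-1) ^ (n - k) * Hfun k q * Ifun k q / (INR k ^ 2)) 1 n.

(* T2 n q is the product of J n q = int_0^1 u^(n+q) (1-u)^(-q) / (1+u) du and an alternating sum S.
   J n q = O(n^(q-1)): for q >= 0 split the integral at 1 - 1/n, bounding (1-u)^(-q) by n^q on the
   left and u^(n+q) by 1 on the right; for q < 0 bound the integrand by C n^q u^((n+q)/2).
   S = O(n^max(-q,0)): put a_k = I(k,q)/k, so that a_(k+1) = k/(k+q) a_k by the Gamma recurrence.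
   For q <> 1/2 the k-th summand is (b_k - a_k)/(2q-1) with b_k = (2q)_k/k! a_k, whose ratio
   b_(k+1)/b_k lies in [0,1]; for q = 1/2 it is H_k a_k, whose ratio also lies in [0,1].
   An alternating sum of terms of constant sign is bounded by its first term when their moduli
   decrease and by its last one when they increase; for q < 0 the a_k increase, but only like
   exp(-q H_k) = O(k^(-q)). Multiplying, T2 n q = O(n^(max(q,0)-1)). *)

From Stdlib Require Import Reals Lra Lia Classical.
From Coquelicot Require Import Coquelicot.
Open Scope R_scope.

Lemma exp_le (x y : R) : x <= y -> exp x <= exp y.
Proof. intros [H|H]; [left; apply exp_increasing, H|rewrite H; lra]. Qed.

Lemma ln_le_sub1 (y : R) : 0 < y -> ln y <= y - 1.
Proof. intros Hy. pose proof (exp_ineq1_le (ln y)) as H. rewrite exp_ln in H; lra. Qed.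

Lemma Rpower_le_1 (u c : R) : 0 < u <= 1 -> 0 <= c -> Rpower u c <= 1.
Proof.
  intros Hu Hc. unfold Rpower. rewrite <- exp_0. apply exp_le.
  assert (ln u <= 0) by (rewrite <- ln_1; apply ln_le; lra). nra.
Qed.

Lemma Rpower_ge_1 (x e : R) : 1 <= x -> 0 <= e -> 1 <= Rpower x e.
Proof.
  intros Hx He. unfold Rpower. rewrite <- exp_0. apply exp_le.
  assert (0 <= ln x) by (rewrite <- ln_1; apply ln_le; lra). nra.
Qed.

Lemma INR_ge2 (n : nat) : (2 <= n)%nat -> 2 <= INR n.
Proof. intros Hn. apply (le_INR 2) in Hn. simpl in Hn. lra. Qed.

Lemma filterlim_monotone_bounded (F : (R -> Prop) -> Prop) {FF : Filter F}
    (le : R -> R -> Prop) (D : R -> Prop) (G : R -> R) (c M : R) :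
  D c ->
  (forall x y, D x -> D y -> le x y -> G x <= G y) ->
  (forall x, D x -> G x <= M) ->
  (forall x0, D x0 -> F (fun x => D x /\ le x0 x)) ->
  exists l, filterlim G F (locally l).
Proof.
  intros Dc Gmono GM Fle.
  destruct (completeness (fun y => exists x, D x /\ y = G x)) as [l [Hub Hlub]].
  - exists M. intros y [x [Dx ->]]. auto.
  - exists (G c), c. auto.
  - exists l. intros P [eps HP].
    assert (Hx0 : exists x0, D x0 /\ l - eps < G x0).
    { apply NNPP; intros Hn.
      enough (l <= l - eps) by (destruct eps; simpl in *; lra).
      apply Hlub. intros y [x [Dx ->]]. apply Rnot_lt_le. intros Hlt. apply Hn. eauto. }
    destruct Hx0 as [x0 [Dx0 Hl]]. unfold filtermap.
    apply (filter_imp (fun x => D x /\ le x0 x)); [|auto].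
    intros x [Dx Hle]. apply HP. change (Rabs (G x - l) < eps).
    assert (G x0 <= G x) by auto.
    assert (G x <= l) by (apply Hub; eauto).
    apply Rabs_def1; lra.
Qed.

Lemma is_RInt_gen_of_primitive (Fa Fb : (R -> Prop) -> Prop) {FFa : Filter Fa} {FFb : Filter Fb}
    (f G : R -> R) (la lb : R) :
  filterlim G Fa (locally la) -> filterlim G Fb (locally lb) ->
  filter_prod Fa Fb (fun ab => is_RInt f (fst ab) (snd ab) (G (snd ab) - G (fst ab))) ->
  is_RInt_gen f Fa Fb (lb - la).
Proof.
  intros Ha Hb Hp. apply filterlimi_locally. intros eps.
  assert (He : 0 < eps / 2) by (destruct eps; simpl; lra).
  assert (Hq : filter_prod Fa Fb (fun ab => ball la (mkposreal _ He) (G (fst ab)) /\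
                                       ball lb (mkposreal _ He) (G (snd ab)))).
  { apply Filter_prod with (1 := Ha _ (locally_ball la (mkposreal _ He)))
                           (2 := Hb _ (locally_ball lb (mkposreal _ He))).
    intros; simpl; auto. }
  generalize (filter_and _ _ Hp Hq). apply filter_imp.
  intros [s t] [Hst [Hs Ht]]. exists (G t - G s). split; auto.
  change (Rabs (G s - la) < eps / 2) in Hs. change (Rabs (G t - lb) < eps / 2) in Ht.
  change (Rabs (G t - G s - (lb - la)) < eps).
  apply Rabs_def2 in Hs; apply Rabs_def2 in Ht. apply Rabs_def1; lra.
Qed.

Lemma is_RInt_gen_abs_le (Fa Fb : (R -> Prop) -> Prop)
    {FFa : ProperFilter Fa} {FFb : ProperFilter Fb} (f : R -> R) (l B : R) :
  is_RInt_gen f Fa Fb l ->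
  filter_prod Fa Fb (fun ab => forall v, is_RInt f (fst ab) (snd ab) v -> Rabs v <= B) ->
  Rabs l <= B.
Proof.
  intros Hl HB. apply Rnot_lt_le. intros Hlt.
  assert (He : 0 < Rabs l - B) by lra.
  apply filterlimi_locally with (eps := mkposreal _ He) in Hl.
  destruct (Hierarchy.filter_ex _ (filter_and _ _ Hl HB)) as [[s t] [[v [Hv Hvl]] Hb]].
  specialize (Hb v Hv). change (Rabs (v - l) < Rabs l - B) in Hvl.
  assert (Rabs l <= Rabs v + Rabs (v - l)).
  { replace l with (v - (v - l)) at 1 by ring.
    eapply Rle_trans; [apply Rabs_triang|]. rewrite Rabs_Ropp. lra. }
  lra.
Qed.

Lemma at_right_segment (a x0 : R) : a < x0 -> at_right a (fun s => a < s <= x0).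
Proof.
  intros Hx0. assert (Hd : 0 < x0 - a) by lra. exists (mkposreal _ Hd).
  intros s Hs Has. change (Rabs (s - a) < x0 - a) in Hs. apply Rabs_def2 in Hs. lra.
Qed.

Lemma at_left_segment (b x0 : R) : x0 < b -> at_left b (fun t => x0 <= t < b).
Proof.
  intros Hx0. assert (Hd : 0 < b - x0) by lra. exists (mkposreal _ Hd).
  intros t Ht Htb. change (Rabs (t - b) < b - x0) in Ht. apply Rabs_def2 in Ht. lra.
Qed.

Section NonnegativeIntegrand.

Variables (Fa Fb : (R -> Prop) -> Prop) (D : R -> Prop) (f : R -> R) (c M : R).
Context {FFa : Filter Fa} {FFb : Filter Fb}.
Hypothesis D_c : D c.
Hypothesis D_convex : forall x y z, D x -> D y -> x <= z <= y -> D z.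
Hypothesis f_cont : forall x, D x -> continuous f x.
Hypothesis f_ge0 : forall x, D x -> 0 <= f x.
Hypothesis Fa_le : forall x0, D x0 -> Fa (fun s => D s /\ s <= x0).
Hypothesis Fb_ge : forall x0, D x0 -> Fb (fun t => D t /\ x0 <= t).
Hypothesis RInt_le_M : forall s t, D s -> D t -> s <= c <= t -> RInt f s t <= M.

Lemma ex_RInt_convex s t : D s -> D t -> ex_RInt f s t.
Proof.
  intros Ds Dt. apply (@ex_RInt_continuous R_CompleteNormedModule). intros z Hz.
  apply f_cont. unfold Rmin, Rmax in Hz.
  destruct (Rle_dec s t); [apply (D_convex s t)|apply (D_convex t s)]; auto; lra.
Qed.

Lemma RInt_convex_ge0 s t : D s -> D t -> s <= t -> 0 <= RInt f s t.
Proof.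
  intros Ds Dt Hst. apply RInt_ge_0; auto using ex_RInt_convex.
  intros x Hx. apply f_ge0, (D_convex s t); auto; lra.
Qed.

Let G t := RInt f c t.

Lemma RInt_convex_primitive s t : D s -> D t -> RInt f s t = G t - G s.
Proof.
  intros Ds Dt. unfold G. rewrite <- (RInt_Chasles f c s t) by auto using ex_RInt_convex.
  unfold plus; simpl; lra.
Qed.

Lemma ex_RInt_gen_nonneg_bounded : exists l, is_RInt_gen f Fa Fb l.
Proof.
  assert (M_ge0 : 0 <= M).
  { apply Rle_trans with (RInt f c c); [right; rewrite RInt_point; reflexivity|apply RInt_le_M; auto; lra]. }
  assert (G_mono : forall x y, D x -> D y -> x <= y -> G x <= G y).
  { intros x y Dx Dy Hxy. assert (H := RInt_convex_ge0 x y Dx Dy Hxy).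
    rewrite RInt_convex_primitive in H; auto; lra. }
  assert (G_c : G c = 0) by (unfold G; rewrite RInt_point; reflexivity).
  destruct (filterlim_monotone_bounded Fb Rle D G c M) as [lb Hlb]; auto.
  { intros t Dt. destruct (Rle_or_lt c t).
    - apply RInt_le_M; auto; lra.
    - assert (G t <= G c) by (apply G_mono; auto; lra). lra. }
  destruct (filterlim_monotone_bounded Fa (fun x y => y <= x) D (fun s => - G s) c M)
    as [la Hla]; auto.
  { intros x y Dx Dy Hyx. assert (G y <= G x) by auto. lra. }
  { intros s Ds. destruct (Rle_or_lt s c).
    - assert (Hsc := RInt_le_M s c Ds D_c ltac:(lra)).
      rewrite RInt_convex_primitive in Hsc; auto; lra.
    - assert (G c <= G s) by (apply G_mono; auto; lra). lra. }
  exists (lb - - la). apply (is_RInt_gen_of_primitive _ _ f G); auto.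
  - apply (filterlim_ext (fun s => opp (- G s))); [intros; apply Ropp_involutive|].
    eapply filterlim_comp; [exact Hla|]. apply (@filterlim_opp R_AbsRing R_NormedModule).
  - apply (Filter_prod _ _ _ D D); [apply (filter_imp (fun s => D s /\ s <= c))|
                                    apply (filter_imp (fun t => D t /\ c <= t))|]; try tauto; auto.
    intros s t Ds Dt. simpl. rewrite <- RInt_convex_primitive by auto.
    apply (@RInt_correct R_CompleteNormedModule), ex_RInt_convex; auto.
Qed.

Lemma RInt_gen_nonneg_bounded {PFa : ProperFilter Fa} {PFb : ProperFilter Fb} :
  Rabs (RInt_gen f Fa Fb) <= M.
Proof.
  destruct ex_RInt_gen_nonneg_bounded as [l Hl].
  rewrite (is_RInt_gen_unique f l Hl). apply (is_RInt_gen_abs_le Fa Fb f); auto.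
  apply (Filter_prod _ _ _ _ _ (Fa_le c D_c) (Fb_ge c D_c)).
  intros s t [Ds Hs] [Dt Ht] v Hv. simpl in Hv. rewrite <- (is_RInt_unique _ _ _ _ Hv).
  rewrite Rabs_pos_eq by (apply RInt_convex_ge0; auto; lra). apply RInt_le_M; auto.
Qed.

End NonnegativeIntegrand.

Lemma Rpower_le_exp_half (p t : R) : 0 <= p -> 0 < t ->
  Rpower t p <= exp (p * ln (2 * (p + 1))) * exp (t / 2).
Proof.
  intros Hp Ht. unfold Rpower. rewrite <- exp_plus. apply exp_le.
  set (u := t / (2 * (p + 1))).
  assert (Hu : 0 < u) by (apply Rdiv_lt_0_compat; lra).
  assert (Ht_u : t = 2 * (p + 1) * u) by (unfold u; field; lra).
  assert (Hln := ln_le_sub1 u Hu).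
  rewrite Ht_u, !ln_mult in * by lra.
  replace (2 * (p + 1) * u / 2) with ((p + 1) * u) by field.
  nra.
Qed.

Lemma RInt_exp_half (K s t : R) :
  is_RInt (fun u => K * exp (- (u / 2))) s t
    (2 * K * exp (- (s / 2)) - 2 * K * exp (- (t / 2))).
Proof.
  set (F := fun u => - 2 * K * exp (- (u / 2))).
  replace (2 * K * exp (- (s / 2)) - 2 * K * exp (- (t / 2))) with (minus (F t) (F s))
    by (unfold F, minus, plus, opp; simpl; ring).
  apply (@is_RInt_derive R_CompleteNormedModule).
  - intros u _. unfold F. auto_derive; [auto|].
    match goal with |- ?a = ?b => change (@eq R a b) end. unfold Rdiv. field.
  - intros u _. apply (@ex_derive_continuous R_AbsRing R_NormedModule). auto_derive. auto.
Qed.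

Definition gamma_integrand (x t : R) : R := Rpower t (x - 1) * exp (- t).

Lemma gamma_integrand_le (x t : R) : 1 <= x -> 0 < t ->
  gamma_integrand x t <= exp ((x - 1) * ln (2 * x)) * exp (- (t / 2)).
Proof.
  intros Hx Ht. unfold gamma_integrand.
  assert (H := Rpower_le_exp_half (x - 1) t ltac:(lra) Ht).
  replace (x - 1 + 1) with x in H by ring.
  assert (Hsplit : exp (- t) = exp (- (t / 2)) * exp (- (t / 2))) by (rewrite <- exp_plus; f_equal; field).
  assert (Hcancel : exp (t / 2) * exp (- (t / 2)) = 1) by (rewrite <- exp_plus, <- exp_0; f_equal; ring).
  rewrite Hsplit.
  apply Rle_trans with (exp ((x - 1) * ln (2 * x)) * exp (t / 2) * (exp (- (t / 2)) * exp (- (t / 2)))).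
  - apply Rmult_le_compat_r; [left; apply Rmult_lt_0_compat; apply exp_pos|exact H].
  - right. transitivity (exp ((x - 1) * ln (2 * x)) * (exp (t / 2) * exp (- (t / 2))) * exp (- (t / 2)));
      [ring|rewrite Hcancel; ring].
Qed.

Lemma is_RInt_gen_Gamma (x : R) : 1 <= x ->
  is_RInt_gen (gamma_integrand x) (at_right 0) (Rbar_locally p_infty) (Gamma x).
Proof.
  intros Hx. set (K := exp ((x - 1) * ln (2 * x))).
  destruct (ex_RInt_gen_nonneg_bounded (at_right 0) (Rbar_locally p_infty) (fun t => 0 < t)
              (gamma_integrand x) 1 (2 * K)) as [l Hl].
  - lra.
  - intros; lra.
  - intros t Ht. apply (@ex_derive_continuous R_AbsRing R_NormedModule).
    unfold gamma_integrand, Rpower. auto_derive. lra.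
  - intros t _. unfold gamma_integrand, Rpower. apply Rmult_le_pos; left; apply exp_pos.
  - intros x0 Hx0. apply (filter_imp (fun s => 0 < s <= x0)); [tauto|].
    apply at_right_segment, Hx0.
  - intros x0 Hx0. exists x0. intros t Ht. lra.
  - intros s t Hs Ht Hst.
    apply Rle_trans with (RInt (fun u => K * exp (- (u / 2))) s t).
    + apply RInt_le; try lra.
      * apply (@ex_RInt_continuous R_CompleteNormedModule). intros z Hz.
        apply (@ex_derive_continuous R_AbsRing R_NormedModule).
        unfold gamma_integrand, Rpower. rewrite Rmin_left in Hz by lra. auto_derive. lra.
      * eexists. apply RInt_exp_half.
      * intros u Hu. apply gamma_integrand_le; lra.
    + rewrite (is_RInt_unique _ _ _ _ (RInt_exp_half K s t)).
      assert (0 < K) by apply exp_pos.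
      assert (0 < exp (- (t / 2))) by apply exp_pos.
      assert (exp (- (s / 2)) <= 1) by (rewrite <- exp_0; apply exp_le; lra).
      nra.
  - unfold Gamma. fold (gamma_integrand x).
    rewrite (is_RInt_gen_unique _ _ Hl). exact Hl.
Qed.

Lemma Rpower_exp_lim_0 (x : R) : 1 <= x ->
  filterlim (fun t => Rpower t x * exp (- t)) (at_right 0) (locally 0).
Proof.
  intros Hx P [eps HP].
  assert (Hd : 0 < Rmin eps 1) by (destruct eps; apply Rmin_pos; simpl; lra).
  exists (mkposreal _ Hd). intros t Ht Htpos. simpl in Htpos. apply HP.
  change (Rabs (t - 0) < Rmin eps 1) in Ht. rewrite Rminus_0_r, Rabs_pos_eq in Ht by lra.
  assert (Hm1 := Rmin_r eps 1). assert (Hm2 := Rmin_l eps 1).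
  change (Rabs (Rpower t x * exp (- t) - 0) < eps).
  rewrite Rminus_0_r, Rabs_pos_eq by (unfold Rpower; apply Rmult_le_pos; left; apply exp_pos).
  assert (Hpow : Rpower t x <= t).
  { rewrite <- (exp_ln t) at 2 by lra. apply exp_le.
    assert (ln t < 0) by (rewrite <- ln_1; apply ln_increasing; lra). nra. }
  assert (exp (- t) <= 1) by (rewrite <- exp_0; apply exp_le; lra).
  assert (0 < Rpower t x) by apply exp_pos.
  nra.
Qed.

Lemma Rpower_exp_lim_infty (x : R) : 0 <= x ->
  filterlim (fun t => Rpower t x * exp (- t)) (Rbar_locally p_infty) (locally 0).
Proof.
  intros Hx P [eps HP].
  set (K := exp ((x + 1 - 1) * ln (2 * (x + 1)))).
  assert (HK : 0 < K) by apply exp_pos.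
  assert (Heps : 0 < eps) by (destruct eps; auto).
  exists (Rmax 1 (2 * K / eps)). intros t Ht. apply HP.
  assert (Ht1 := Rmax_l 1 (2 * K / eps)). assert (Ht2 := Rmax_r 1 (2 * K / eps)).
  change (Rabs (Rpower t x * exp (- t) - 0) < eps).
  rewrite Rminus_0_r, Rabs_pos_eq by (unfold Rpower; apply Rmult_le_pos; left; apply exp_pos).
  assert (Hg := gamma_integrand_le (x + 1) t ltac:(lra) ltac:(lra)).
  unfold gamma_integrand in Hg. fold K in Hg. replace (x + 1 - 1) with x in Hg by ring.
  assert (Hinv : exp (- (t / 2)) * (1 + t / 2) <= 1).
  { assert (Hprod : exp (- (t / 2)) * exp (t / 2) = 1)
      by (rewrite <- exp_plus, <- exp_0; f_equal; ring).
    rewrite <- Hprod at 2. apply Rmult_le_compat_l; [left; apply exp_pos|apply exp_ineq1_le]. }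
  assert (Hlt : 2 * K < eps * t).
  { apply Rmult_lt_reg_r with (/ eps); [apply Rinv_0_lt_compat; lra|].
    replace (eps * t * / eps) with t by (field; lra). unfold Rdiv in Ht2. lra. }
  assert (0 < exp (- (t / 2))) by apply exp_pos.
  nra.
Qed.

Lemma Gamma_succ (x : R) : 1 <= x -> Gamma (x + 1) = x * Gamma x.
Proof.
  intros Hx.
  (* integration by parts: h is a primitive of t^x e^(-t) - x t^(x-1) e^(-t) *)
  set (h := fun t => - (Rpower t x * exp (- t))).
  assert (Hh : is_RInt_gen (fun t => Rpower t x * exp (- t) - x * gamma_integrand x t)
                 (at_right 0) (Rbar_locally p_infty) (opp 0 - opp 0)).
  { apply (is_RInt_gen_of_primitive _ _ _ h).
    - apply (filterlim_comp _ _ _ (fun t => Rpower t x * exp (- t)) (@opp R_AbelianGroup) _ (locally 0));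
        [apply Rpower_exp_lim_0, Hx|apply (@filterlim_opp R_AbsRing R_NormedModule)].
    - apply (filterlim_comp _ _ _ (fun t => Rpower t x * exp (- t)) (@opp R_AbelianGroup) _ (locally 0));
        [apply Rpower_exp_lim_infty; lra|apply (@filterlim_opp R_AbsRing R_NormedModule)].
    - apply (Filter_prod _ _ _ (fun s => 0 < s) (fun t => 0 < t)).
      + exists (mkposreal _ Rlt_0_1). intros y _ Hy. exact Hy.
      + exists 0. auto.
      + intros s t Hs Ht. simpl.
        apply (@is_RInt_derive R_CompleteNormedModule h); intros u Hu;
          assert (0 < u) by (unfold Rmin, Rmax in Hu; destruct (Rle_dec s t); lra).
        * unfold h, gamma_integrand, Rpower. auto_derive; [lra|].
          match goal with |- ?a = ?b => change (@eq R a b) end.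
          replace ((x - 1) * ln u) with (x * ln u + - ln u) by ring.
          rewrite exp_plus, (exp_Ropp (ln u)), exp_ln by lra. field. lra.
        * apply (@ex_derive_continuous R_AbsRing R_NormedModule).
          unfold gamma_integrand, Rpower. auto_derive. lra. }
  assert (Hsum := is_RInt_gen_plus _ _ _ _ Hh (is_RInt_gen_scal _ x _ (is_RInt_gen_Gamma x Hx))).
  apply (is_RInt_gen_unique (gamma_integrand (x + 1))).
  replace (x * Gamma x) with (plus (opp 0 - opp 0) (scal x (Gamma x)))
    by (unfold plus, opp, scal; simpl; unfold mult; simpl; ring).
  apply (is_RInt_gen_ext (fun t => plus (Rpower t x * exp (- t) - x * gamma_integrand x t)
                                         (scal x (gamma_integrand x t)))); [|exact Hsum].
  apply (Filter_prod _ _ _ (fun _ => True) (fun _ => True)); try apply filter_true.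
  intros s t _ _ u _. unfold plus, scal, gamma_integrand; simpl. unfold mult; simpl.
  replace (x + 1 - 1) with x by ring. ring.
Qed.

Lemma rGamma_succ (x : R) : 1 <= x -> rGamma (x + 1) = rGamma x / x.
Proof.
  intros Hx. unfold rGamma.
  destruct (Rlt_dec 0 (x + 1)); [|lra]. destruct (Rlt_dec 0 x); [|lra].
  rewrite Gamma_succ, Rinv_mult by lra. unfold Rdiv. ring.
Qed.

Definition J_integrand (n : nat) (q u : R) : R :=
  Rpower u (INR n + q) * Rpower (1 - u) (- q) / (1 + u).

Definition J (n : nat) (q : R) : R := RInt_gen (J_integrand n q) (at_right 0) (at_left 1).

Lemma J_integrand_continuous n q u : 0 < u < 1 -> continuous (J_integrand n q) u.
Proof.
  intros Hu. apply (@ex_derive_continuous R_AbsRing R_NormedModule).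
  unfold J_integrand, Rpower. auto_derive. repeat split; lra.
Qed.

Lemma J_integrand_ge0 n q u : 0 < u -> 0 <= J_integrand n q u.
Proof.
  intros Hu. unfold J_integrand, Rpower, Rdiv.
  apply Rmult_le_pos; [apply Rmult_le_pos; left; apply exp_pos|].
  left; apply Rinv_0_lt_compat; lra.
Qed.

Lemma ex_RInt_J_integrand n q s t : 0 < s < 1 -> 0 < t < 1 -> ex_RInt (J_integrand n q) s t.
Proof.
  intros Hs Ht. apply (@ex_RInt_continuous R_CompleteNormedModule). intros z Hz.
  apply J_integrand_continuous. unfold Rmin, Rmax in Hz. destruct (Rle_dec s t); lra.
Qed.

Lemma J_integrand_le n q u : 0 < u < 1 ->
  J_integrand n q u <= Rpower u (INR n + q) * Rpower (1 - u) (- q).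
Proof.
  intros Hu. unfold J_integrand, Rdiv.
  rewrite <- (Rmult_1_r (Rpower u (INR n + q) * Rpower (1 - u) (- q))) at 2.
  apply Rmult_le_compat_l; [unfold Rpower; apply Rmult_le_pos; left; apply exp_pos|].
  rewrite <- Rinv_1. apply Rinv_le_contravar; lra.
Qed.

Lemma is_RInt_Rpower (c s t : R) : 0 < c + 1 -> 0 < s -> 0 < t ->
  is_RInt (fun u => Rpower u c) s t ((Rpower t (c + 1) - Rpower s (c + 1)) / (c + 1)).
Proof.
  intros Hc Hs Ht.
  set (F := fun u => Rpower u (c + 1) / (c + 1)).
  replace ((Rpower t (c + 1) - Rpower s (c + 1)) / (c + 1)) with (minus (F t) (F s))
    by (unfold F, minus, plus, opp; simpl; field; lra).
  apply (@is_RInt_derive R_CompleteNormedModule); intros u Hu;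
    assert (0 < u) by (unfold Rmin, Rmax in Hu; destruct (Rle_dec s t); lra).
  - unfold F, Rpower. auto_derive; [lra|].
    match goal with |- ?a = ?b => change (@eq R a b) end.
    replace ((c + 1) * ln u) with (c * ln u + ln u) by ring.
    rewrite exp_plus, exp_ln by lra. field. lra.
  - apply (@ex_derive_continuous R_AbsRing R_NormedModule). unfold Rpower. auto_derive. lra.
Qed.

Lemma RInt_Rpower_le (c s t : R) : 0 < c + 1 -> 0 < s <= t -> t <= 1 ->
  RInt (fun u => Rpower u c) s t <= / (c + 1).
Proof.
  intros Hc Hs Ht. rewrite (is_RInt_unique _ _ _ _ (is_RInt_Rpower c s t Hc ltac:(lra) ltac:(lra))).
  assert (Rpower t (c + 1) <= 1) by (apply Rpower_le_1; lra).
  assert (0 < Rpower s (c + 1)) by apply exp_pos.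
  unfold Rdiv. rewrite <- (Rmult_1_l (/ (c + 1))) at 2.
  apply Rmult_le_compat_r; [left; apply Rinv_0_lt_compat|]; lra.
Qed.

Lemma is_RInt_one_minus_Rpower (q s t : R) : q < 1 -> s < 1 -> t < 1 ->
  is_RInt (fun u => Rpower (1 - u) (- q)) s t
    ((Rpower (1 - s) (1 - q) - Rpower (1 - t) (1 - q)) / (1 - q)).
Proof.
  intros Hq Hs Ht.
  set (F := fun u => - Rpower (1 - u) (1 - q) / (1 - q)).
  replace ((Rpower (1 - s) (1 - q) - Rpower (1 - t) (1 - q)) / (1 - q)) with (minus (F t) (F s))
    by (unfold F, minus, plus, opp; simpl; field; lra).
  apply (@is_RInt_derive R_CompleteNormedModule); intros u Hu;
    assert (u < 1) by (unfold Rmin, Rmax in Hu; destruct (Rle_dec s t); lra).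
  - unfold F, Rpower. auto_derive; [lra|].
    match goal with |- ?a = ?b => change (@eq R a b) end.
    replace (1 + - u) with (1 - u) by ring.
    replace ((1 - q) * ln (1 - u)) with (- q * ln (1 - u) + ln (1 - u)) by ring.
    rewrite exp_plus, exp_ln by lra. field. lra.
  - apply (@ex_derive_continuous R_AbsRing R_NormedModule). unfold Rpower. auto_derive. lra.
Qed.

Lemma RInt_one_minus_Rpower_le (q s t : R) : q < 1 -> s <= t < 1 ->
  RInt (fun u => Rpower (1 - u) (- q)) s t <= Rpower (1 - s) (1 - q) / (1 - q).
Proof.
  intros Hq Hst.
  rewrite (is_RInt_unique _ _ _ _ (is_RInt_one_minus_Rpower q s t Hq ltac:(lra) ltac:(lra))).
  assert (0 < Rpower (1 - t) (1 - q)) by apply exp_pos.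
  unfold Rdiv. apply Rmult_le_compat_r; [left; apply Rinv_0_lt_compat|]; lra.
Qed.

Lemma RInt_le_scal (f g : R -> R) (K s t : R) : s <= t -> ex_RInt f s t -> ex_RInt g s t ->
  (forall u, s < u < t -> f u <= K * g u) -> RInt f s t <= K * RInt g s t.
Proof.
  intros Hst Hf Hg Hfg.
  change (K * RInt g s t) with (scal K (RInt g s t)).
  rewrite <- (RInt_scal (V := R_CompleteNormedModule) g s t K Hg).
  apply RInt_le; auto. apply (ex_RInt_scal (V := R_NormedModule) g s t K Hg).
Qed.

Lemma J_abs_le (n : nat) (q c M : R) : 0 < c < 1 ->
  (forall s t, 0 < s <= c -> c <= t < 1 -> RInt (J_integrand n q) s t <= M) ->
  Rabs (J n q) <= M.
Proof.
  intros Hc HM.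
  apply (RInt_gen_nonneg_bounded _ _ (fun u => 0 < u < 1) (J_integrand n q) c M).
  - exact Hc.
  - intros; lra.
  - intros; apply J_integrand_continuous; auto.
  - intros; apply J_integrand_ge0; lra.
  - intros x0 Hx0. apply (filter_imp (fun s => 0 < s <= x0)); [intros; lra|].
    apply at_right_segment; lra.
  - intros x0 Hx0. apply (filter_imp (fun t => x0 <= t < 1)); [intros; lra|].
    apply at_left_segment; lra.
  - intros s t Hs Ht Hst. apply HM; lra.
  - apply at_right_proper_filter.
  - apply at_left_proper_filter.
Qed.

(* With v = 1 - u and p = -q: u^(m/2) v^p <= e^(-m v/2) v^p <= (2p/(e m))^p, the maximum in v. *)
Lemma J_integrand_le_neg n q u : (2 <= n)%nat -> -1 <= q < 0 -> 0 < u < 1 ->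
  J_integrand n q u <=
    exp (- q * ln (- 2 * q) + q + q * ln (INR n + q)) * Rpower u ((INR n + q) / 2).
Proof.
  intros Hn Hq Hu. assert (Hn2 := INR_ge2 n Hn).
  eapply Rle_trans; [apply J_integrand_le, Hu|].
  set (m := INR n + q). assert (Hm : 0 < m) by (unfold m; lra).
  set (p := - q). assert (Hp : 0 < p) by (unfold p; lra).
  set (v := 1 - u). assert (Hv : 0 < v) by (unfold v; lra).
  unfold Rpower. rewrite <- !exp_plus. apply exp_le.
  assert (Hlnu : ln u <= - v) by (assert (H := ln_le_sub1 u ltac:(lra)); unfold v; lra).
  assert (Hlnv := ln_le_sub1 (m * v / (2 * p)) ltac:(apply Rdiv_lt_0_compat; nra)).
  rewrite ln_div, ln_mult in Hlnv by nra.
  replace (- 2 * q) with (2 * p) by (unfold p; ring). replace q with (- p) by (unfold p; ring).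
  replace (- - p) with p by ring.
  assert (p * (ln m + ln v - ln (2 * p)) <= p * (m * v / (2 * p) - 1))
    by (apply Rmult_le_compat_l; lra).
  replace (p * (m * v / (2 * p) - 1)) with (m * v / 2 - p) in H by (field; lra).
  nra.
Qed.

Lemma Rpower_inv_n (n : nat) (q : R) : (2 <= n)%nat ->
  Rpower (INR n) q * / INR n = Rpower (INR n) (q - 1).
Proof.
  intros Hn. assert (Hn2 := INR_ge2 n Hn).
  unfold Rminus. rewrite Rpower_plus, Rpower_Ropp, Rpower_1 by lra. reflexivity.
Qed.

Lemma RInt_J_integrand_le_neg n q s t : (2 <= n)%nat -> -1 <= q < 0 -> 0 < s <= t -> t < 1 ->
  RInt (J_integrand n q) s t <=
    2 * exp (- q * ln (- 2 * q) + q + (1 - q) * ln 2) * Rpower (INR n) (q - 1).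
Proof.
  intros Hn Hq Hs Ht. assert (Hn2 := INR_ge2 n Hn).
  set (m := INR n + q). assert (Hm : INR n / 2 <= m) by (unfold m; lra).
  set (E := exp (- q * ln (- 2 * q) + q + q * ln m)).
  assert (HE : 0 < E) by apply exp_pos.
  eapply Rle_trans.
  { apply (RInt_le_scal _ (fun u => Rpower u (m / 2))); try lra.
    - apply ex_RInt_J_integrand; lra.
    - eexists; apply is_RInt_Rpower; lra.
    - intros u Hu. apply J_integrand_le_neg; auto; lra. }
  assert (Hint := RInt_Rpower_le (m / 2) s t ltac:(lra) ltac:(lra) ltac:(lra)).
  apply Rle_trans with (2 * E * / m).
  { apply Rle_trans with (E * / (m / 2 + 1)); [apply Rmult_le_compat_l; lra|].
    replace (2 * E * / m) with (E * (2 * / m)) by ring. apply Rmult_le_compat_l; [lra|].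
    replace (2 * / m) with (/ (m / 2)) by (field; lra).
    apply Rinv_le_contravar; lra. }
  assert (Hinv_m : / m = exp (- ln m)) by (rewrite exp_Ropp, exp_ln; lra).
  assert (Hln_m : ln (INR n) - ln 2 <= ln m)
    by (rewrite <- ln_div by lra; apply ln_le; [apply Rdiv_lt_0_compat|]; lra).
  rewrite Hinv_m. unfold E, Rpower.
  rewrite Rmult_assoc, <- exp_plus, Rmult_assoc, <- exp_plus.
  apply Rmult_le_compat_l; [lra|]. apply exp_le. nra.
Qed.

Lemma RInt_J_integrand_le_nonneg n q s t : (2 <= n)%nat -> 0 <= q < 1 ->
  0 < s <= 1 - / INR n -> 1 - / INR n <= t < 1 ->
  RInt (J_integrand n q) s t <= (1 + / (1 - q)) * Rpower (INR n) (q - 1).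
Proof.
  intros Hn Hq Hs Ht. assert (Hn2 := INR_ge2 n Hn).
  set (c := 1 - / INR n) in *.
  assert (Hinv : 0 < / INR n <= 1 / 2)
    by (split; [apply Rinv_0_lt_compat|unfold Rdiv; rewrite Rmult_1_l; apply Rinv_le_contravar]; lra).
  rewrite <- (RInt_Chasles (V := R_CompleteNormedModule) _ s c t)
    by (apply ex_RInt_J_integrand; unfold c in *; lra).
  change (RInt (J_integrand n q) s c + RInt (J_integrand n q) c t <=
          (1 + / (1 - q)) * Rpower (INR n) (q - 1)).
  assert (Hleft : RInt (J_integrand n q) s c <= Rpower (INR n) (q - 1)).
  { eapply Rle_trans.
    { apply (RInt_le_scal _ (fun u => Rpower u (INR n + q)) (Rpower (INR n) q)); try lra.
      - apply ex_RInt_J_integrand; unfold c in *; lra.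
      - eexists; apply is_RInt_Rpower; unfold c in *; lra.
      - intros u Hu. eapply Rle_trans; [apply J_integrand_le; unfold c in *; lra|].
        rewrite (Rmult_comm (Rpower (INR n) q)). apply Rmult_le_compat_l; [left; apply exp_pos|].
        unfold Rpower. apply exp_le.
        assert (ln (/ INR n) <= ln (1 - u)) by (apply ln_le; unfold c in *; lra).
        rewrite ln_Rinv in H by lra. nra. }
    rewrite <- Rpower_inv_n by auto. apply Rmult_le_compat_l; [left; apply exp_pos|].
    eapply Rle_trans; [apply RInt_Rpower_le; unfold c in *; lra|].
    apply Rinv_le_contravar; lra. }
  assert (Hright : RInt (J_integrand n q) c t <= / (1 - q) * Rpower (INR n) (q - 1)).
  { eapply Rle_trans.
    { apply (RInt_le_scal _ (fun u => Rpower (1 - u) (- q)) 1); try lra.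
      - apply ex_RInt_J_integrand; unfold c in *; lra.
      - eexists; apply is_RInt_one_minus_Rpower; unfold c in *; lra.
      - intros u Hu. eapply Rle_trans; [apply J_integrand_le; unfold c in *; lra|].
        apply Rmult_le_compat_r; [left; apply exp_pos|]. apply Rpower_le_1; unfold c in *; lra. }
    rewrite Rmult_1_l. eapply Rle_trans; [apply RInt_one_minus_Rpower_le; unfold c in *; lra|].
    replace (1 - c) with (/ INR n) by (unfold c; ring).
    right. unfold Rpower. rewrite ln_Rinv by lra. unfold Rdiv. rewrite Rmult_comm.
    f_equal. f_equal. ring. }
  lra.
Qed.

Lemma J_bound (q : R) : -1 <= q < 1 ->
  exists C, forall n, (2 <= n)%nat -> Rabs (J n q) <= C * Rpower (INR n) (q - 1).
Proof.
  intros Hq. destruct (Rlt_dec q 0) as [Hneg|Hnonneg].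
  - exists (2 * exp (- q * ln (- 2 * q) + q + (1 - q) * ln 2)). intros n Hn.
    apply (J_abs_le n q (1 / 2)); [lra|].
    intros s t Hs Ht. apply RInt_J_integrand_le_neg; auto; lra.
  - exists (1 + / (1 - q)). intros n Hn. assert (Hn2 := INR_ge2 n Hn).
    assert (Hinv : 0 < / INR n <= 1 / 2)
      by (split; [apply Rinv_0_lt_compat|unfold Rdiv; rewrite Rmult_1_l; apply Rinv_le_contravar]; lra).
    apply (J_abs_le n q (1 - / INR n)); [lra|].
    intros s t Hs Ht. apply RInt_J_integrand_le_nonneg; auto; lra.
Qed.

Definition alt_sum (x : nat -> R) (K n : nat) : R := sum_n_m (fun k => (-1) ^ (n - k) * x k) K n.

Lemma alt_sum_n_n (x : nat -> R) (K : nat) : alt_sum x K K = x K.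
Proof.
  unfold alt_sum. rewrite sum_n_n, Nat.sub_diag. simpl.
  match goal with |- ?a = ?b => change (@eq R a b) end. ring.
Qed.

Lemma alt_sum_S (x : nat -> R) (K n : nat) : (K <= n)%nat ->
  alt_sum x K (S n) = x (S n) - alt_sum x K n.
Proof.
  intros Hn. unfold alt_sum.
  rewrite (sum_n_m_Chasles _ K n (S n)), sum_n_n, Nat.sub_diag by lia.
  rewrite (sum_n_m_ext_loc _ (fun k => mult (-1) ((-1) ^ (n - k) * x k))).
  2:{ intros k Hk. rewrite Nat.sub_succ_l by lia. simpl. unfold mult; simpl.
      match goal with |- ?a = ?b => change (@eq R a b) end. ring. }
  rewrite sum_n_m_mult_l. unfold plus, mult; simpl.
  change (@sum_n_m (Ring.AbelianMonoid R_Ring)) with (@sum_n_m R_AbelianMonoid).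
  match goal with |- ?a = ?b => change (@eq R a b) end. ring.
Qed.

Lemma alt_sum_ext (x y : nat -> R) (K n : nat) : (forall k, (K <= k)%nat -> x k = y k) ->
  alt_sum x K n = alt_sum y K n.
Proof. intros H. apply sum_n_m_ext_loc. intros k Hk. rewrite H by lia. reflexivity. Qed.

Lemma alt_sum_lin (x y : nat -> R) (a b : R) (K n : nat) : (K <= n)%nat ->
  alt_sum (fun k => a * x k + b * y k) K n = a * alt_sum x K n + b * alt_sum y K n.
Proof.
  induction 1; [rewrite !alt_sum_n_n; reflexivity|].
  rewrite !alt_sum_S, IHle by auto. ring.
Qed.

Lemma alt_sum_nonincr_le (y : nat -> R) (K n : nat) :
  (forall k, (K <= k)%nat -> 0 <= y (S k) <= y k) -> (K <= n)%nat ->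
  Rabs (alt_sum y K n) <= y K.
Proof.
  intros Hy Hn.
  enough (0 <= y n /\ y n - y K <= alt_sum y K n <= y K) by (apply Rabs_le; lra).
  induction Hn.
  - rewrite alt_sum_n_n. specialize (Hy K (le_n K)). lra.
  - rewrite alt_sum_S by auto. specialize (Hy m Hn). lra.
Qed.

Lemma alt_sum_nondecr_le (y : nat -> R) (K n : nat) :
  0 <= y K -> (forall k, (K <= k)%nat -> y k <= y (S k)) -> (K <= n)%nat ->
  Rabs (alt_sum y K n) <= y n.
Proof.
  intros Hy0 Hy Hn.
  enough (0 <= alt_sum y K n <= y n) by (apply Rabs_le; lra).
  induction Hn.
  - rewrite alt_sum_n_n. lra.
  - rewrite alt_sum_S by auto. specialize (Hy m Hn). lra.
Qed.

Section RatioSequences.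

Variables (x rho : nat -> R) (K : nat).
Hypothesis x_ratio : forall k, (K <= k)%nat -> x (S k) = rho k * x k.
Hypothesis rho_ge0 : forall k, (K <= k)%nat -> 0 <= rho k.

Lemma Rabs_ratio k : (K <= k)%nat -> Rabs (x (S k)) = rho k * Rabs (x k).
Proof. intros Hk. rewrite x_ratio, Rabs_mult, Rabs_pos_eq; auto. Qed.

Lemma alt_sum_ratio_Rabs n : (K <= n)%nat ->
  Rabs (alt_sum x K n) = Rabs (alt_sum (fun k => Rabs (x k)) K n).
Proof.
  intros Hn.
  assert (Hsign : forall s, s * x K >= 0 -> forall k, (K <= k)%nat -> s * x k >= 0).
  { intros s Hs. induction 1; auto. rewrite x_ratio by auto.
    specialize (rho_ge0 m H). nra. }
  destruct (Rle_or_lt 0 (x K)) as [HK|HK].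
  - f_equal. apply alt_sum_ext. intros k Hk.
    symmetry. apply Rabs_pos_eq. specialize (Hsign 1 ltac:(lra) k Hk). lra.
  - rewrite <- Rabs_Ropp. f_equal.
    transitivity (-1 * alt_sum x K n + 0 * alt_sum x K n); [ring|].
    rewrite <- alt_sum_lin by auto. apply alt_sum_ext. intros k Hk.
    specialize (Hsign (-1) ltac:(lra) k Hk). rewrite Rabs_left1 by lra. ring.
Qed.

Lemma alt_sum_contracting_le n : (forall k, (K <= k)%nat -> rho k <= 1) -> (K <= n)%nat ->
  Rabs (alt_sum x K n) <= Rabs (x K).
Proof.
  intros Hrho Hn. rewrite alt_sum_ratio_Rabs by auto.
  apply alt_sum_nonincr_le; auto. intros k Hk.
  rewrite Rabs_ratio by auto. specialize (Hrho k Hk). specialize (rho_ge0 k Hk).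
  pose proof (Rabs_pos (x k)). split; nra.
Qed.

Lemma alt_sum_expanding_le n : (forall k, (K <= k)%nat -> 1 <= rho k) -> (K <= n)%nat ->
  Rabs (alt_sum x K n) <= Rabs (x n).
Proof.
  intros Hrho Hn. rewrite alt_sum_ratio_Rabs by auto.
  apply alt_sum_nondecr_le; auto using Rabs_pos. intros k Hk.
  rewrite Rabs_ratio by auto. specialize (Hrho k Hk).
  pose proof (Rabs_pos (x k)). nra.
Qed.

End RatioSequences.

Definition harmonic (k : nat) : R := sum_n_m (fun j => / INR j) 1 k.

Lemma harmonic_0 : harmonic 0 = 0.
Proof. unfold harmonic. rewrite sum_n_m_zero by lia. reflexivity. Qed.

Lemma harmonic_S (k : nat) : harmonic (S k) = harmonic k + / INR (S k).
Proof. unfold harmonic. rewrite sum_n_Sm by lia. reflexivity. Qed.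

Lemma harmonic_le_1_ln (k : nat) : (1 <= k)%nat -> harmonic k <= 1 + ln (INR k).
Proof.
  induction 1.
  - unfold harmonic. rewrite sum_n_n. simpl. rewrite ln_1. lra.
  - rewrite harmonic_S, S_INR.
    assert (Hm : 1 <= INR m) by (apply (le_INR 1) in H; simpl in H; lra).
    assert (Hln := ln_le_sub1 (INR m / (INR m + 1)) ltac:(apply Rdiv_lt_0_compat; lra)).
    rewrite ln_div in Hln by lra.
    replace (INR m / (INR m + 1) - 1) with (- / (INR m + 1)) in Hln by (field; lra).
    lra.
Qed.

Lemma harmonic_ge (k : nat) : (1 <= k)%nat -> 2 * INR k / (INR k + 1) <= harmonic k.
Proof.
  induction 1.
  - unfold harmonic. rewrite sum_n_n. simpl. lra.
  - rewrite harmonic_S, S_INR.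
    assert (Hm : 1 <= INR m) by (apply (le_INR 1) in H; simpl in H; lra).
    apply Rle_trans with (2 * INR m / (INR m + 1) + / (INR m + 1)); [|lra].
    apply Rmult_le_reg_r with ((INR m + 1) * (INR m + 1 + 1)); [nra|].
    field_simplify; lra.
Qed.

Definition T2_summand (q : R) (k : nat) : R := Hfun k q * Ifun k q / INR k ^ 2.
Definition aseq (q : R) (k : nat) : R := Ifun k q / INR k.
Definition poch_ratio (q : R) (k : nat) : R := poch (2 * q) k / INR (Factorial.fact k).
Definition bseq (q : R) (k : nat) : R := poch_ratio q k * aseq q k.

Lemma INR_fact_pos (k : nat) : 0 < INR (Factorial.fact k).
Proof. apply lt_0_INR, Factorial.lt_O_fact. Qed.

Lemma T2_summand_split (q : R) (k : nat) : q <> 1 / 2 -> (1 <= k)%nat ->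
  T2_summand q k = / (2 * q - 1) * bseq q k + - / (2 * q - 1) * aseq q k.
Proof.
  intros Hq Hk. apply (le_INR 1) in Hk. simpl in Hk.
  unfold T2_summand, Hfun, bseq, aseq, poch_ratio.
  destruct (Req_EM_T q (1 / 2)); [contradiction|].
  assert (2 * q - 1 <> 0) by (intros H; apply Hq; lra).
  pose proof (INR_fact_pos k). field. repeat split; lra.
Qed.

Lemma T2_summand_half (k : nat) : (1 <= k)%nat ->
  T2_summand (1 / 2) k = harmonic k * aseq (1 / 2) k.
Proof.
  intros Hk. apply (le_INR 1) in Hk. simpl in Hk. unfold T2_summand, Hfun, aseq.
  destruct (Req_EM_T (1 / 2) (1 / 2)); [|congruence]. fold (harmonic k). field. lra.
Qed.

(* [rGamma_succ] needs [k + q >= 1]: this is why the alternating sums start at [k = 2]. *)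
Lemma aseq_S (q : R) (k : nat) : (2 <= k)%nat -> -1 <= q ->
  aseq q (S k) = INR k / (INR k + q) * aseq q k.
Proof.
  intros Hk Hq. assert (Hk2 := INR_ge2 k Hk). unfold aseq, Ifun.
  rewrite fact_simpl, mult_INR, S_INR.
  replace (INR k + 1 + q) with ((INR k + q) + 1) by ring.
  rewrite rGamma_succ by lra. field. lra.
Qed.

Lemma bseq_S (q : R) (k : nat) : (2 <= k)%nat -> -1 <= q ->
  bseq q (S k) = (2 * q + INR k) / (INR k + 1) * (INR k / (INR k + q)) * bseq q k.
Proof.
  intros Hk Hq. assert (Hk2 := INR_ge2 k Hk). unfold bseq. rewrite aseq_S by auto.
  unfold poch_ratio. simpl poch. rewrite fact_simpl, mult_INR, S_INR.
  pose proof (INR_fact_pos k). field. lra.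
Qed.

Lemma alt_sum_bseq_le (q : R) (n : nat) : -1 <= q < 1 -> (2 <= n)%nat ->
  Rabs (alt_sum (bseq q) 2 n) <= Rabs (bseq q 2).
Proof.
  intros Hq Hn.
  apply (alt_sum_contracting_le _ (fun k => (2 * q + INR k) / (INR k + 1) * (INR k / (INR k + q))));
    auto; intros k Hk; assert (Hk2 := INR_ge2 k Hk).
  - apply bseq_S; auto; lra.
  - apply Rmult_le_pos; apply Rdiv_le_0_compat; lra.
  - replace ((2 * q + INR k) / (INR k + 1) * (INR k / (INR k + q)))
      with ((2 * q + INR k) * INR k / ((INR k + 1) * (INR k + q))) by (field; lra).
    apply Rmult_le_reg_r with ((INR k + 1) * (INR k + q)); [nra|].
    unfold Rdiv. rewrite Rmult_assoc, Rinv_l by nra. nra.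
Qed.

Lemma Rabs_aseq_le (q : R) (k : nat) : -1 <= q < 0 ->
  Rabs (aseq q (S (S k))) <= Rabs (aseq q 2) * exp (- q * harmonic k).
Proof.
  intros Hq. induction k.
  - rewrite harmonic_0, Rmult_0_r, exp_0. lra.
  - rewrite aseq_S, Rabs_mult, harmonic_S by (lia || lra).
    rewrite Rabs_pos_eq by (rewrite !S_INR; pose proof (pos_INR k); apply Rdiv_le_0_compat; lra).
    assert (Hratio : INR (S (S k)) / (INR (S (S k)) + q) <= exp (- q * / INR (S k))).
    { rewrite !S_INR. pose proof (pos_INR k).
      replace ((INR k + 1 + 1) / (INR k + 1 + 1 + q)) with (1 + - q / (INR k + 1 + 1 + q))
        by (field; lra).
      eapply Rle_trans; [apply exp_ineq1_le|]. apply exp_le.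
      unfold Rdiv. apply Rmult_le_compat_l; [lra|]. apply Rinv_le_contravar; lra. }
    rewrite Rmult_plus_distr_l, exp_plus.
    replace (Rabs (aseq q 2) * (exp (- q * harmonic k) * exp (- q * / INR (S k))))
      with (exp (- q * / INR (S k)) * (Rabs (aseq q 2) * exp (- q * harmonic k))) by ring.
    apply Rmult_le_compat; auto; [|apply Rabs_pos].
    rewrite !S_INR. pose proof (pos_INR k). apply Rdiv_le_0_compat; lra.
Qed.

Lemma harmonic_le_ln (k : nat) : harmonic k <= 1 + ln (INR (S (S k))).
Proof.
  assert (Hln : 0 <= ln (INR (S (S k)))).
  { rewrite <- ln_1. apply ln_le; [lra|]. assert (H2 := INR_ge2 (S (S k)) ltac:(lia)). lra. }
  destruct k as [|k]; [rewrite harmonic_0; lra|].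
  eapply Rle_trans; [apply harmonic_le_1_ln; lia|].
  apply Rplus_le_compat_l, ln_le; [apply lt_0_INR; lia|apply le_INR; lia].
Qed.

Lemma alt_sum_aseq_bound (q : R) : -1 <= q < 1 -> exists K, forall n, (2 <= n)%nat ->
  Rabs (alt_sum (aseq q) 2 n) <= K * Rpower (INR n) (Rmax (- q) 0).
Proof.
  intros Hq. destruct (Rlt_dec q 0) as [Hneg|Hnonneg].
  - exists (Rabs (aseq q 2) * exp (- q)). intros n Hn.
    rewrite Rmax_left by lra.
    eapply Rle_trans.
    { apply (alt_sum_expanding_le _ (fun k => INR k / (INR k + q))); auto;
        intros k Hk; assert (Hk2 := INR_ge2 k Hk).
      - apply aseq_S; auto; lra.
      - apply Rdiv_le_0_compat; lra.
      - apply Rmult_le_reg_r with (INR k + q); [lra|].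
        unfold Rdiv. rewrite Rmult_assoc, Rinv_l by lra. lra. }
    destruct n as [|[|k]]; [lia|lia|].
    eapply Rle_trans; [apply Rabs_aseq_le; lra|].
    rewrite Rmult_assoc. apply Rmult_le_compat_l; [apply Rabs_pos|].
    unfold Rpower. rewrite <- exp_plus. apply exp_le.
    assert (Hh := harmonic_le_ln k). nra.
  - exists (Rabs (aseq q 2)). intros n Hn. assert (Hn2 := INR_ge2 n Hn).
    rewrite Rmax_right, Rpower_O, Rmult_1_r by lra.
    apply (alt_sum_contracting_le _ (fun k => INR k / (INR k + q))); auto;
      intros k Hk; assert (Hk2 := INR_ge2 k Hk).
    + apply aseq_S; auto; lra.
    + apply Rdiv_le_0_compat; lra.
    + apply Rmult_le_reg_r with (INR k + q); [lra|].
      unfold Rdiv. rewrite Rmult_assoc, Rinv_l by lra. lra.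
Qed.

Lemma alt_sum_T2_summand_half_le (n : nat) : (2 <= n)%nat ->
  Rabs (alt_sum (T2_summand (1 / 2)) 2 n) <= Rabs (T2_summand (1 / 2) 2).
Proof.
  intros Hn.
  apply (alt_sum_contracting_le _
           (fun k => harmonic (S k) / harmonic k * (INR k / (INR k + 1 / 2)))); auto;
    intros k Hk; assert (Hk2 := INR_ge2 k Hk);
    assert (Hge := harmonic_ge k ltac:(lia));
    assert (Hpos : 0 < 2 * INR k / (INR k + 1)) by (apply Rdiv_lt_0_compat; lra);
    assert (HS := harmonic_S k); rewrite S_INR in HS;
    assert (Hinv : 0 < / (INR k + 1)) by (apply Rinv_0_lt_compat; lra).
  - rewrite !T2_summand_half, aseq_S by (lia || lra). field. split; lra.
  - apply Rmult_le_pos; apply Rdiv_le_0_compat; lra.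
  - rewrite HS.
    replace ((harmonic k + / (INR k + 1)) / harmonic k * (INR k / (INR k + 1 / 2)))
      with (2 * INR k * (harmonic k + / (INR k + 1)) / (harmonic k * (2 * INR k + 1)))
      by (field; lra).
    apply Rmult_le_reg_r with (harmonic k * (2 * INR k + 1)); [nra|].
    unfold Rdiv. rewrite Rmult_assoc, Rinv_l by nra.
    assert (INR k * / (INR k + 1) <= harmonic k / 2).
    { apply Rmult_le_reg_l with 2; [lra|]. unfold Rdiv in Hge. lra. }
    nra.
Qed.

Lemma alt_sum_T2_summand_bound (q : R) : -1 <= q < 1 -> exists K, forall n, (2 <= n)%nat ->
  Rabs (alt_sum (T2_summand q) 2 n) <= K * Rpower (INR n) (Rmax (- q) 0).
Proof.
  intros Hq. destruct (Req_EM_T q (1 / 2)) as [->|Hhalf].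
  - exists (Rabs (T2_summand (1 / 2) 2)). intros n Hn. assert (Hn2 := INR_ge2 n Hn).
    rewrite Rmax_right, Rpower_O, Rmult_1_r by lra. apply alt_sum_T2_summand_half_le, Hn.
  - destruct (alt_sum_aseq_bound q Hq) as [Ka HKa].
    set (c := / (2 * q - 1)).
    exists (Rabs c * (Rabs (bseq q 2) + Ka)). intros n Hn. assert (Hn2 := INR_ge2 n Hn).
    assert (Hpow : 1 <= Rpower (INR n) (Rmax (- q) 0)) by (apply Rpower_ge_1; [lra|apply Rmax_r]).
    rewrite (alt_sum_ext _ (fun k => c * bseq q k + - c * aseq q k))
      by (intros k Hk; apply T2_summand_split; auto; lia).
    rewrite alt_sum_lin by lia.
    eapply Rle_trans; [apply Rabs_triang|]. rewrite !Rabs_mult, Rabs_Ropp.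
    assert (Hb := alt_sum_bseq_le q n Hq Hn). assert (Ha := HKa n Hn).
    pose proof (Rabs_pos c). pose proof (Rabs_pos (bseq q 2)).
    assert (Rabs (bseq q 2) <= Rabs (bseq q 2) * Rpower (INR n) (Rmax (- q) 0)) by nra.
    nra.
Qed.

Definition T2_sum (n : nat) (q : R) : R :=
  sum_n_m (fun k => (-1) ^ (n - k) * Hfun k q * Ifun k q / (INR k ^ 2)) 1 n.

Lemma T2_sum_eq (n : nat) (q : R) : (2 <= n)%nat ->
  T2_sum n q = (-1) ^ (n - 1) * T2_summand q 1 + alt_sum (T2_summand q) 2 n.
Proof.
  intros Hn. unfold T2_sum. rewrite (sum_n_m_Chasles _ 1 1 n), sum_n_n by lia.
  unfold alt_sum, T2_summand, plus; simpl. f_equal.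
  - unfold Rdiv. ring.
  - apply sum_n_m_ext. intros k.
    match goal with |- ?a = ?b => change (@eq R a b) end. unfold Rdiv. ring.
Qed.

Lemma T2_sum_bound (q : R) : -1 <= q < 1 -> exists K, forall n, (2 <= n)%nat ->
  Rabs (T2_sum n q) <= K * Rpower (INR n) (Rmax (- q) 0).
Proof.
  intros Hq. destruct (alt_sum_T2_summand_bound q Hq) as [K HK].
  exists (Rabs (T2_summand q 1) + K). intros n Hn. assert (Hn2 := INR_ge2 n Hn).
  assert (Hpow : 1 <= Rpower (INR n) (Rmax (- q) 0)) by (apply Rpower_ge_1; [lra|apply Rmax_r]).
  rewrite T2_sum_eq by auto.
  eapply Rle_trans; [apply Rabs_triang|]. rewrite Rabs_mult, pow_1_abs, Rmult_1_l.
  specialize (HK n Hn). pose proof (Rabs_pos (T2_summand q 1)). nra.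
Qed.

Lemma T2_bound (q : R) : -1 <= q < 1 -> exists C, forall n, (2 <= n)%nat ->
  Rabs (T2 n q) <= C * Rpower (INR n) (Rmax q 0 - 1).
Proof.
  intros Hq. destruct (J_bound q Hq) as [CJ HJ]. destruct (T2_sum_bound q Hq) as [CS HS].
  exists (CJ * CS). intros n Hn.
  change (T2 n q) with (J n q * T2_sum n q). rewrite Rabs_mult.
  replace (Rmax q 0 - 1) with ((q - 1) + Rmax (- q) 0)
    by (unfold Rmax; destruct (Rle_dec q 0), (Rle_dec (- q) 0); lra).
  rewrite Rpower_plus.
  replace (CJ * CS * (Rpower (INR n) (q - 1) * Rpower (INR n) (Rmax (- q) 0)))
    with (CJ * Rpower (INR n) (q - 1) * (CS * Rpower (INR n) (Rmax (- q) 0))) by ring.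
  apply Rmult_le_compat; auto using Rabs_pos.
Qed.

Lemma Rpower_neg1 (x : R) : 0 < x -> Rpower x (- 1) = / x.
Proof. intros Hx. replace (- 1) with (- (1)) by ring. rewrite Rpower_Ropp, Rpower_1; lra. Qed.

Theorem lemma3p7 :
  (forall q : R, -1 <= q < 0 ->
     exists C : R, exists N : nat, forall n : nat, (N <= n)%nat ->
       Rabs (T2 n q) <= C * / INR n) /\
  (exists C : R, exists N : nat, forall n : nat, (N <= n)%nat ->
       Rabs (T2 n 0) <= C * (ln (INR n) / INR n)) /\
  (forall q : R, 0 < q < 1 ->
     exists C : R, exists N : nat, forall n : nat, (N <= n)%nat ->
       Rabs (T2 n q) <= C * Rpower (INR n) (q - 1)).
Proof.
  split; [|split].
  - intros q Hq. destruct (T2_bound q ltac:(lra)) as [C HC].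
    exists C, 2%nat. intros n Hn. assert (Hn2 := INR_ge2 n Hn).
    rewrite <- Rpower_neg1 by lra.
    replace (- 1) with (Rmax q 0 - 1) by (rewrite Rmax_right; lra). auto.
  - destruct (T2_bound 0 ltac:(lra)) as [C HC].
    exists (Rabs C), 3%nat. intros n Hn.
    assert (Hn3 : 3 <= INR n) by (apply (le_INR 3) in Hn; simpl in Hn; lra).
    assert (Hln : 1 <= ln (INR n)).
    { rewrite <- (ln_exp 1). apply ln_le; [apply exp_pos|]. pose proof exp_le_3. lra. }
    eapply Rle_trans; [apply HC; lia|].
    rewrite Rmax_left, Rminus_0_l, Rpower_neg1 by lra.
    assert (0 < / INR n) by (apply Rinv_0_lt_compat; lra).
    apply Rle_trans with (Rabs C * / INR n); [apply Rmult_le_compat_r; [lra|apply Rle_abs]|].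
    apply Rmult_le_compat_l; [apply Rabs_pos|]. unfold Rdiv. nra.
  - intros q Hq. destruct (T2_bound q ltac:(lra)) as [C HC].
    exists C, 2%nat. intros n Hn.
    replace (q - 1) with (Rmax q 0 - 1) by (rewrite Rmax_left; lra). auto.
Qed.
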